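(* Let $p$ be a non-negative integer. For any integer $m$ and $-\pi<\arg\zeta<\pi$, $$S_{-2p-1,0}(\zeta\mathrm{e}^{-m\pi i})=S_{-2p-1,0}(\zeta)+\frac{(-1)^pK''_+}{2^{2p}(p!)^2}H^{(1)}_0(\zeta)+\frac{(-1)^pK''_-}{2^{2p}(p!)^2}H^{(2)}_0(\zeta),\qquad K''_\pm=-\frac{m\pi^2(m\pm1)}{4}.$$
   Context: $J_0,Y_0$ are Bessel functions of order $0$, $H^{(1)}_0=J_0+iY_0$, $H^{(2)}_0=J_0-iY_0$, $\psi=\Gamma'/\Gamma$, $(a)_k=a(a+1)\cdots(a+k-1)$. Lommel functions: $S_{-1,0}(\zeta)=\frac12\sum_{k\ge0}\frac{(-1)^k(\zeta/2)^{2k}}{(k!)^2}\big\{[\log\frac{\zeta}{2}-\psi(k+1)]^2-\frac12\psi'(k+1)+\frac{\pi^2}{4}\big\}$ and $S_{-2p-1,0}(\zeta)=\sum_{j=0}^{p-1}\frac{(-1)^j\zeta^{-2p+2j}}{2^{2j+2}(-p)_{j+1}(-p)_{j+1}}+\frac{(-1)^pS_{-1,0}(\zeta)}{2^{2p}(p!)^2}$. Right-hand side functions are on the principal branch $-\pi<\arg\zeta<\pi$; $g(\zeta\mathrm{e}^{-m\pi i})$ is the value of the analytic continuation of the principal branch at the point over $\zeta$ with argument $\arg\zeta-m\pi$. *)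

From Stdlib Require Import Reals.
From Coquelicot Require Import Coquelicot.
Open Scope R_scope.

Definition CSeries (a : nat -> Complex.C) : Complex.C :=
  (Series (fun k => Re (a k)), Series (fun k => Im (a k))).

Definition Cpow (z : Complex.C) (n : nat) : Complex.C := pow_n (K := C_Ring) z n.

Fixpoint harm (k : nat) : R :=
  match k with O => 0 | S n => harm n + / INR (S n) end.

Definition euler_gamma : R := real (Lim_seq (fun n => harm n - ln (INR n))).

(* digamma and trigamma at positive integers:
   psi(k+1) = -gamma + H_k,  psi'(k+1) = sum_{j>=0} 1/(k+1+j)^2 *)
Definition psi_int (k : nat) : R := - euler_gamma + harm k.
Definition psi1_int (k : nat) : R := Series (fun j => / (INR (k + 1 + j)) ^ 2).

Fixpoint poch (a : R) (k : nat) : R :=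
  match k with O => 1 | S n => poch a n * (a + INR n) end.

Fixpoint Csum (f : nat -> Complex.C) (n : nat) : Complex.C :=
  match n with O => RtoC 0 | S n' => Cplus (Csum f n') (f n') end.

(* Functions on the logarithmic covering of C\{0}: a point is described by
   zeta (in C, nonzero) together with a chosen value lam of log(zeta/2).
   The principal branch corresponds to lam = Log(zeta/2) (Im in (-pi,pi)). *)

Definition bterm (zeta : Complex.C) (k : nat) : Complex.C :=
  Cmult (RtoC ((-1) ^ k / (INR (Factorial.fact k)) ^ 2)) (Cpow (Cmult zeta (RtoC (/2))) (2 * k)).

Definition J0 (zeta : Complex.C) : Complex.C := CSeries (bterm zeta).

(* Y_0 (DLMF 10.8.2): (2/pi)[(log(z/2)+gamma) J0(z) + sum_{k>=1} (-1)^(k+1) H_k (z^2/4)^k/(k!)^2]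
   written as (2/pi) sum_k (-1)^k (z/2)^(2k)/(k!)^2 (log(z/2) - psi(k+1)). *)
Definition Y0 (zeta lam : Complex.C) : Complex.C :=
  Cmult (RtoC (2 / PI))
    (CSeries (fun k => Cmult (bterm zeta k) (Cminus lam (RtoC (psi_int k))))).

Definition H1_0 (zeta lam : Complex.C) : Complex.C := Cplus (J0 zeta) (Cmult Ci (Y0 zeta lam)).
Definition H2_0 (zeta lam : Complex.C) : Complex.C := Cminus (J0 zeta) (Cmult Ci (Y0 zeta lam)).

Definition S_m1 (zeta lam : Complex.C) : Complex.C :=
  Cmult (RtoC (/2)) (CSeries (fun k =>
    Cmult (bterm zeta k)
      (Cplus (Cpow (Cminus lam (RtoC (psi_int k))) 2)
             (RtoC (- (1/2) * psi1_int k + PI ^ 2 / 4))))).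

Definition S_odd (p : nat) (zeta lam : Complex.C) : Complex.C :=
  Cplus
    (Csum (fun j =>
       Cmult (RtoC ((-1) ^ j / (2 ^ (2 * j + 2) * poch (- INR p) (S j) * poch (- INR p) (S j))))
             (Cinv (Cpow zeta (2 * p - 2 * j)))) p)
    (Cmult (RtoC ((-1) ^ p / (2 ^ (2 * p) * (INR (Factorial.fact p)) ^ 2))) (S_m1 zeta lam)).

(* Moving to another branch replaces lam = log(zeta/2) by lam - w (here w = m pi i), and
   among the functions involved only S_{-1,0} depends on lam through a square.
   Expanding [(lam - psi(k+1) - w)^2] termwise gives
     S_{-1,0}(lam - w) = S_{-1,0}(lam) - (pi w / 2) Y_0 + (w^2 / 2) J_0,
   and for w = m pi i this is S_{-1,0}(lam) + K''_+ H^(1)_0 + K''_- H^(2)_0, because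
   K''_+ + K''_- = -m^2 pi^2 / 2 and K''_+ - K''_- = -m pi^2 / 2.  Splitting the series
   termwise is legitimate since all three are dominated by B (c |zeta/2|^2)^k / k!. *)

From Pilot Require Import Defs.
From Stdlib Require Import Reals ZArith Lra Lia.
From Coquelicot Require Import Coquelicot.
Open Scope R_scope.

Lemma Cmod_Cpow (z : C) (n : nat) : Cmod (Defs.Cpow z n) = Cmod z ^ n.
Proof.
  induction n as [|n IH]; unfold Defs.Cpow in *; simpl.
  - apply Cmod_1.
  - change (Cmod (Cmult z (pow_n (K := C_Ring) z n)) = Cmod z * Cmod z ^ n).
    now rewrite Cmod_mult, IH.
Qed.

Lemma Cpow_2 (z : C) : Defs.Cpow z 2 = Cmult z z.
Proof. unfold Defs.Cpow. simpl. change (Cmult z (Cmult z 1) = Cmult z z). ring. Qed.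

Definition ex_CSeries (a : nat -> C) : Prop :=
  ex_series (fun k => Re (a k)) /\ ex_series (fun k => Im (a k)).

Lemma CSeries_ext (a b : nat -> C) : (forall k, a k = b k) -> CSeries a = CSeries b.
Proof.
  intros Hab. unfold CSeries. f_equal; apply Series_ext; intros k; now rewrite Hab.
Qed.

Lemma ex_CSeries_plus (a b : nat -> C) :
  ex_CSeries a -> ex_CSeries b -> ex_CSeries (fun k => Cplus (a k) (b k)).
Proof.
  intros [Ha1 Ha2] [Hb1 Hb2]. split.
  - apply (ex_series_ext (fun k => Re (a k) + Re (b k))); [reflexivity|].
    now apply (ex_series_plus (V := R_NormedModule)).
  - apply (ex_series_ext (fun k => Im (a k) + Im (b k))); [reflexivity|].
    now apply (ex_series_plus (V := R_NormedModule)).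
Qed.

Lemma ex_CSeries_scal (w : C) (a : nat -> C) :
  ex_CSeries a -> ex_CSeries (fun k => Cmult w (a k)).
Proof.
  intros [Ha1 Ha2]. split.
  - apply (ex_series_ext (fun k => Re w * Re (a k) + - Im w * Im (a k))).
    { intros k. unfold Re, Im. simpl. ring. }
    apply (ex_series_plus (V := R_NormedModule)); now apply (ex_series_scal_l (V := R_NormedModule)).
  - apply (ex_series_ext (fun k => Re w * Im (a k) + Im w * Re (a k))).
    { intros k. unfold Re, Im. simpl. ring. }
    apply (ex_series_plus (V := R_NormedModule)); now apply (ex_series_scal_l (V := R_NormedModule)).
Qed.

Lemma CSeries_plus (a b : nat -> C) : ex_CSeries a -> ex_CSeries b ->
  CSeries (fun k => Cplus (a k) (b k)) = Cplus (CSeries a) (CSeries b).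
Proof.
  intros [Ha1 Ha2] [Hb1 Hb2]. unfold CSeries, Cplus. simpl.
  f_equal; now apply Series_plus.
Qed.

Lemma CSeries_scal (w : C) (a : nat -> C) : ex_CSeries a ->
  CSeries (fun k => Cmult w (a k)) = Cmult w (CSeries a).
Proof.
  intros [Ha1 Ha2]. unfold CSeries, Cmult. simpl. f_equal.
  - rewrite <- !Series_scal_l, <- Series_minus by now apply (ex_series_scal_l (V := R_NormedModule)).
    apply Series_ext. intros k. unfold Re, Im. simpl. ring.
  - rewrite <- !Series_scal_l, <- Series_plus by now apply (ex_series_scal_l (V := R_NormedModule)).
    apply Series_ext. intros k. unfold Re, Im. simpl. ring.
Qed.

Lemma ex_CSeries_exp_bound (a : nat -> C) (M y : R) :
  (forall k, Cmod (a k) <= M * (/ INR (Factorial.fact k) * y ^ k)) -> ex_CSeries a.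
Proof.
  intros Ha.
  assert (Hexp : ex_series (fun k => M * (/ INR (Factorial.fact k) * y ^ k))).
  { apply (ex_series_scal_l (V := R_NormedModule)).
    apply ex_pseries_R. eexists. apply is_exp_Reals. }
  split; (apply (ex_series_le (V := R_CompleteNormedModule)) with (2 := Hexp);
          intros k; eapply Rle_trans; [|apply Ha]; change norm with Rabs).
  - apply re_le_Cmod.
  - pose proof (Rmax_Cmod (a k)) as Hmax. pose proof (Rmax_r (Rabs (Re (a k))) (Rabs (Im (a k)))).
    unfold Re, Im in *. lra.
Qed.

Lemma INR_fact_ge1 (k : nat) : 1 <= INR (Factorial.fact k).
Proof. apply (le_INR 1). pose proof (Factorial.lt_O_fact k). lia. Qed.

Lemma Cmod_bterm_le (zeta : C) (k : nat) :
  Cmod (bterm zeta k) <= / INR (Factorial.fact k) * (Cmod (Cmult zeta (RtoC (/ 2))) ^ 2) ^ k.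
Proof.
  unfold bterm. rewrite Cmod_mult, Cmod_R, Cmod_Cpow, pow_mult.
  pose proof (INR_fact_ge1 k) as Hf.
  assert (Hw : 0 <= (Cmod (Cmult zeta (RtoC (/ 2))) ^ 2) ^ k)
    by (apply pow_le, pow2_ge_0).
  rewrite Rabs_div by (apply pow_nonzero; lra).
  rewrite pow_1_abs, <- RPow_abs, Rabs_pos_eq by lra.
  apply Rmult_le_compat_r; [exact Hw|].
  unfold Rdiv. rewrite Rmult_1_l. apply Rinv_le_contravar; nra.
Qed.

Lemma ex_CSeries_bterm_mul (zeta : C) (X : nat -> C) (B c : R) :
  (forall k, Cmod (X k) <= B * c ^ k) ->
  ex_CSeries (fun k => Cmult (bterm zeta k) (X k)).
Proof.
  intros HX. apply (ex_CSeries_exp_bound _ B (c * Cmod (Cmult zeta (RtoC (/ 2))) ^ 2)).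
  intros k. rewrite Cmod_mult, Rpow_mult_distr.
  replace (B * (/ INR (Factorial.fact k) * (c ^ k * (Cmod (Cmult zeta (RtoC (/ 2))) ^ 2) ^ k)))
    with ((/ INR (Factorial.fact k) * (Cmod (Cmult zeta (RtoC (/ 2))) ^ 2) ^ k) * (B * c ^ k))
    by ring.
  apply Rmult_le_compat; try apply Cmod_ge_0; [apply Cmod_bterm_le | apply HX].
Qed.

Lemma harm_bounds (k : nat) : 0 <= harm k <= INR k.
Proof.
  induction k as [|k IH]; [simpl; lra|]. cbn [harm].
  pose proof (S_INR k).
  assert (Hk : 1 <= INR (S k)) by (apply (le_INR 1); lia).
  assert (0 < / INR (S k) <= 1).
  { split; [apply Rinv_0_lt_compat; lra|]. rewrite <- Rinv_1. apply Rinv_le_contravar; lra. }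
  lra.
Qed.

Lemma INR_succ_le_pow2 (k : nat) : INR k + 1 <= 2 ^ k.
Proof.
  induction k as [|k IH]; [simpl; lra|]. rewrite S_INR. simpl.
  assert (1 <= 2 ^ k) by (apply pow_R1_Rle; lra). lra.
Qed.

Lemma Cmod_sub_psi_int_le (lam : C) (k : nat) :
  Cmod (Cminus lam (RtoC (psi_int k))) <= (Cmod lam + Rabs euler_gamma + 1) * 2 ^ k.
Proof.
  unfold Cminus. eapply Rle_trans; [apply Cmod_triangle|].
  rewrite Cmod_opp, Cmod_R. unfold psi_int.
  pose proof (harm_bounds k). pose proof (INR_succ_le_pow2 k).
  pose proof (Cmod_ge_0 lam). pose proof (Rabs_pos euler_gamma).
  assert (1 <= 2 ^ k) by (apply pow_R1_Rle; lra).
  assert (Rabs (- euler_gamma + harm k) <= Rabs euler_gamma + INR k).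
  { eapply Rle_trans; [apply Rabs_triang|]. rewrite Rabs_Ropp, (Rabs_pos_eq (harm k)); lra. }
  assert (0 <= (Cmod lam + Rabs euler_gamma) * (2 ^ k - 1)) by (apply Rmult_le_pos; lra).
  lra.
Qed.

(* If the partial sums diverge, [Series] returns the junk value [0], which is within the bounds. *)
Lemma Series_bounds_of_partial (a : nat -> R) (M : R) :
  (forall n, 0 <= sum_n a n <= M) -> 0 <= Series a <= M.
Proof.
  intros Ha. unfold Series.
  pose proof (Lim_seq_le_loc (fun _ => 0) (sum_n a)) as Hlo.
  pose proof (Lim_seq_le_loc (sum_n a) (fun _ => M)) as Hhi.
  rewrite Lim_seq_const in Hlo, Hhi.
  assert (HM : 0 <= M) by (pose proof (Ha O); lra).
  destruct (Lim_seq (sum_n a)) as [l| |]; simpl; [|lra|lra].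
  split; [apply Hlo | apply Hhi]; exists O; intros n _; apply Ha.
Qed.

Lemma sum_inv_sq_bounds (k n : nat) :
  0 <= sum_n (fun j => / INR (k + 1 + j) ^ 2) n <= 2 - / INR (S n).
Proof.
  induction n as [|n IH].
  - rewrite sum_O. simpl INR.
    assert (1 <= INR (k + 1 + 0)) by (apply (le_INR 1); lia).
    assert (/ INR (k + 1 + 0) ^ 2 <= 1) by (rewrite <- Rinv_1; apply Rinv_le_contravar; nra).
    assert (0 < / INR (k + 1 + 0) ^ 2) by (apply Rinv_0_lt_compat; nra).
    lra.
  - rewrite sum_Sn, (S_INR (S n)). change plus with Rplus.
    set (x := INR (S n)) in *.
    assert (Hx : 1 <= x) by (apply (le_INR 1); lia).
    assert (Hkx : x + 1 <= INR (k + 1 + S n)) by (unfold x; rewrite <- S_INR; apply le_INR; lia).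
    assert (0 < / INR (k + 1 + S n) ^ 2) by (apply Rinv_0_lt_compat; nra).
    assert (/ INR (k + 1 + S n) ^ 2 <= / (x * (x + 1))) by (apply Rinv_le_contravar; nra).
    assert (/ (x * (x + 1)) = / x - / (x + 1)) by (field; lra).
    lra.
Qed.

Lemma psi1_int_bounds (k : nat) : 0 <= psi1_int k <= 2.
Proof.
  apply Series_bounds_of_partial. intros n.
  pose proof (sum_inv_sq_bounds k n).
  assert (0 < / INR (S n)) by (apply Rinv_0_lt_compat, lt_0_INR; lia).
  lra.
Qed.

Lemma ex_CSeries_J0 (zeta : C) : ex_CSeries (bterm zeta).
Proof.
  apply (ex_CSeries_exp_bound _ 1 (Cmod (Cmult zeta (RtoC (/ 2))) ^ 2)).
  intros k. rewrite Rmult_1_l. apply Cmod_bterm_le.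
Qed.

Lemma ex_CSeries_Y0 (zeta lam : C) :
  ex_CSeries (fun k => Cmult (bterm zeta k) (Cminus lam (RtoC (psi_int k)))).
Proof. eapply ex_CSeries_bterm_mul. intros k. apply Cmod_sub_psi_int_le. Qed.

Lemma ex_CSeries_S_m1 (zeta lam : C) :
  ex_CSeries (fun k => Cmult (bterm zeta k)
    (Cplus (Defs.Cpow (Cminus lam (RtoC (psi_int k))) 2)
           (RtoC (- (1/2) * psi1_int k + PI ^ 2 / 4)))).
Proof.
  set (A := Cmod lam + Rabs euler_gamma + 1).
  apply (ex_CSeries_bterm_mul _ _ (A ^ 2 + (1 + PI ^ 2 / 4)) 4).
  intros k. eapply Rle_trans; [apply Cmod_triangle|].
  rewrite Cmod_Cpow, Cmod_R.
  assert (Hd : Cmod (Cminus lam (RtoC (psi_int k))) ^ 2 <= A ^ 2 * 4 ^ k).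
  { replace (A ^ 2 * 4 ^ k) with ((A * 2 ^ k) ^ 2)
      by (replace 4 with (2 * 2) by ring; rewrite !Rpow_mult_distr; ring).
    apply pow_incr. split; [apply Cmod_ge_0 | apply Cmod_sub_psi_int_le]. }
  assert (He : Rabs (- (1/2) * psi1_int k + PI ^ 2 / 4) <= 1 + PI ^ 2 / 4).
  { pose proof (psi1_int_bounds k). pose proof (pow2_ge_0 PI). apply Rabs_le. lra. }
  assert (1 <= 4 ^ k) by (apply pow_R1_Rle; lra).
  assert (0 <= 1 + PI ^ 2 / 4) by (pose proof (pow2_ge_0 PI); lra).
  nra.
Qed.

Lemma S_m1_shift (zeta lam w : C) :
  S_m1 zeta (Cminus lam w) =
  Cplus (Cplus (S_m1 zeta lam) (Cmult (Cmult (Copp w) (RtoC (PI / 2))) (Y0 zeta lam)))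
        (Cmult (Cmult (Cmult w w) (RtoC (/ 2))) (J0 zeta)).
Proof.
  unfold S_m1, Y0, J0.
  set (u := bterm zeta).
  set (d := fun k => Cminus lam (RtoC (psi_int k))).
  set (e := fun k => RtoC (- (1/2) * psi1_int k + PI ^ 2 / 4)).
  rewrite (CSeries_ext _ (fun k => Cplus (Cmult (u k) (Cplus (Defs.Cpow (d k) 2) (e k)))
             (Cplus (Cmult (Cmult (RtoC (-2)) w) (Cmult (u k) (d k))) (Cmult (Cmult w w) (u k))))).
  2: { intros k. rewrite !Cpow_2. unfold d, e. ring. }
  pose proof (ex_CSeries_S_m1 zeta lam) as HT.
  pose proof (ex_CSeries_Y0 zeta lam) as HUD.
  pose proof (ex_CSeries_J0 zeta) as HU.
  rewrite CSeries_plus, CSeries_plus, !CSeries_scal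
    by auto using ex_CSeries_plus, ex_CSeries_scal.
  unfold d, e.
  destruct (CSeries (fun k => Cmult (u k) (Cplus (Defs.Cpow _ 2) _))) as [t1 t2],
    (CSeries (fun k => Cmult (u k) (Cminus lam _))) as [y1 y2],
    (CSeries u) as [j1 j2], w as [w1 w2].
  assert (PI <> 0) by (pose proof PI_RGT_0; lra).
  apply injective_projections; simpl; field; assumption.
Qed.

Theorem lemma3p8 (p : nat) (m : Z) (r theta : R) :
  0 < r -> - PI < theta < PI ->
  let zeta : Complex.C := (r * cos theta, r * sin theta) in
  let lam : Complex.C := (ln r - ln 2, theta) in
  let Kp : R := - (IZR m * PI ^ 2 * (IZR m + 1)) / 4 in
  let Km : R := - (IZR m * PI ^ 2 * (IZR m - 1)) / 4 in
  let c : R := (-1) ^ p / (2 ^ (2 * p) * (INR (Factorial.fact p)) ^ 2) in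
  S_odd p zeta (Cminus lam (Cmult (RtoC (IZR m * PI)) Ci)) =
  Cplus (Cplus (S_odd p zeta lam)
               (Cmult (RtoC (c * Kp)) (H1_0 zeta lam)))
        (Cmult (RtoC (c * Km)) (H2_0 zeta lam)).
Proof.
  (* The identity holds for every zeta and every choice of lam. *)
  intros _ _ zeta lam Kp Km c.
  unfold S_odd, H1_0, H2_0. rewrite S_m1_shift. fold c.
  destruct (Csum _ p) as [q1 q2], (S_m1 zeta lam) as [s1 s2],
    (Y0 zeta lam) as [y1 y2], (J0 zeta) as [j1 j2].
  unfold Kp, Km.
  apply injective_projections; simpl; field.
Qed.
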